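(* For every $\ell\ge2$, $E_\ell\le\max\Big\{\frac1\ell\sum_{i=0}^{\ell-1}\log_\ell D_i : \{D_i\}_{i=0}^{\ell-1}\in\mathcal{V}^{(\ell)}_{LP}\Big\}$, where $\mathcal{V}^{(\ell)}_{LP}$ is the set of all $\ell$-dimensions LP-valid sequences.
   Context: A kernel of dimension $\ell$ is a bijection $g:\{0,1\}^\ell\to\{0,1\}^\ell$. ${\bf a}\bullet{\bf b}$ denotes concatenation, $d_H$ Hamming distance. Partial distances: $D_{min}^{(i)}=\min\{d_H(g({\bf w}\bullet 0\bullet{\bf u}),g({\bf w}\bullet 1\bullet {\bf v})) : {\bf w}\in\{0,1\}^i,\ {\bf u},{\bf v}\in\{0,1\}^{\ell-i-1}\}$; exponent $E(g)=\frac1\ell\sum_{i=0}^{\ell-1}\log_\ell D_{min}^{(i)}$; $E_\ell=\max_g E(g)$ over all kernels of dimension $\ell$. Let $d(n,k)$ be the largest possible minimum distance of a binary code of length $n$ with $2^k$ codewords, and $P_i(x)=\sum_{m=0}^{i}(-1)^m\binom{x}{m}\binom{\ell-x}{i-m}$. A sequence $\{D_i\}_{i=0}^{\ell-1}$ of non-negative integers, monotone non-decreasing with $D_i\le d(\ell,\ell-i)$, is an $\ell$-dimensions LP-valid sequence if there exist non-negative reals $\bar B_i^{(k)}$ ($k\in\{0,\dots,\ell-1\}$, $D_k\le i\le\ell$) with: (a) $\sum_{i=D_{\ell-r}}^{\ell}\bar B_i^{(\ell-r)}=2^r-1$ for $r\in\{1,\dots,\ell\}$; (b) $\bar B_i^{(\ell-r)}\ge\bar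 B_i^{(\ell-r+1)}$ for $r\in\{1,\dots,\ell-1\}$, $D_{\ell-r+1}\le i\le\ell$; (c) $\sum_{j=D_{\ell-r}}^{\ell}\bar B_j^{(\ell-r)}P_i(j)\ge-\binom{\ell}{i}$ for $i\in\{0,\dots,\ell\}$, $r\in\{1,\dots,\ell\}$. *)

From Stdlib Require Import Reals.
From mathcomp Require Import all_boot.

Set Implicit Arguments. Unset Strict Implicit. Unset Printing Implicit Defensive.

(* binary vectors of length l; coordinate j is position j (0-based), so
   x = w . b . u with |w| = i means x i = b and x j = w_j for j < i *)
Definition bv (l : nat) := {ffun 'I_l -> bool}.

Definition dH (l : nat) (x y : bv l) : nat := #|[pred j : 'I_l | x j != y j]|.

Definition kernel (l : nat) (g : bv l -> bv l) : Prop := bijective g.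

(* x = w.0.u and y = w.1.v for some w of length i *)
Definition split_at (l i : nat) (x y : bv l) : bool :=
  [forall j : 'I_l, ((j < i) ==> (x j == y j)) &&
                    ((nat_of_ord j == i) ==> (~~ x j && y j))].

(* partial distance D_min^{(i)} (a minimum of Hamming distances, all <= l,
   over a nonempty set when i < l; the default value l is thus harmless) *)
Definition Dmin (l : nat) (g : bv l -> bv l) (i : nat) : nat :=
  \big[minn/l]_(x : bv l) \big[minn/l]_(y : bv l | split_at i x y) dH (g x) (g y).

Definition logb (l : nat) (x : R) : R := Rdiv (ln x) (ln (INR l)).

Definition seq_exponent (l : nat) (D : nat -> nat) : R :=
  Rmult (Rinv (INR l)) (\big[Rplus/R0]_(i < l) logb l (INR (D i))).

Definition exponent (l : nat) (g : bv l -> bv l) : R := seq_exponent l (Dmin g).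

(* minimum distance of a code (used only for codes with >= 2 words) *)
Definition min_dist (n : nat) (C : {set bv n}) : nat :=
  \big[minn/n]_(x in C) \big[minn/n]_(y in C | y != x) dH x y.

Definition dcode (n k : nat) : nat :=
  \max_(C : {set bv n} | #|C| == 2 ^ k) min_dist C.

Definition kraw (l i x : nat) : R :=
  \big[Rplus/R0]_(m < i.+1)
     Rmult (Rmult (pow (-1) m) (INR 'C(x, m))) (INR 'C(l - x, i - m)).

(* l-dimensions LP-valid sequence {D_i}_{i=0}^{l-1} (values of D at i >= l
   are irrelevant) *)
Definition LP_valid (l : nat) (D : nat -> nat) : Prop :=
  (forall i, i.+1 < l -> D i <= D i.+1) /\
  (forall i, i < l -> D i <= dcode l (l - i)) /\
  exists B : nat -> nat -> R,
    (forall k i, k < l -> D k <= i <= l -> Rle R0 (B k i)) /\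
    (* (a) *)
    (forall r, 1 <= r <= l ->
       \big[Rplus/R0]_(D (l - r) <= i < l.+1) B (l - r) i
       = Rminus (pow 2 r) R1) /\
    (* (b) *)
    (forall r i, 1 <= r <= l - 1 -> D (l - r + 1) <= i <= l ->
       Rge (B (l - r) i) (B (l - r + 1) i)) /\
    (* (c) *)
    (forall i r, i <= l -> 1 <= r <= l ->
       Rge (\big[Rplus/R0]_(D (l - r) <= j < l.+1) Rmult (B (l - r) j) (kraw l i j))
           (Ropp (INR 'C(l, i)))).

(* Sort the coordinates by partial distance, D'_0 <= ... <= D'_(l-1); this only
   permutes the summands of the exponent.  Two distinct inputs that agree on the
   first k sorted coordinates first differ at a coordinate of rank >= k, hence
   their images are at distance >= D'_k.  So g maps each coset of these k
   coordinates to a code with 2^(l-k) words and minimum distance >= D'_k, which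
   gives D'_k <= d(l, l-k).  Averaging the distance distributions of these codes
   over the cosets yields coefficients satisfying (a) by counting pairs, (b)
   because the cosets refine as k grows, and (c) by Delsarte's argument: the
   Krawtchouk polynomial expands in Walsh characters, which turns each sum in (c)
   into a sum of squares. *)

From Stdlib Require Import Reals.
From mathcomp Require Import all_boot all_algebra.
From mathcomp Require Import Rstruct.

Set Implicit Arguments. Unset Strict Implicit. Unset Printing Implicit Defensive.

Import GRing.Theory Num.Theory.

Lemma geq_bigminn_cond (I : eqType) (r : seq I) (P : pred I) (F : I -> nat) d i0 :
  i0 \in r -> P i0 -> \big[minn/d]_(i <- r | P i) F i <= F i0.
Proof.
elim: r => // a r IHr; rewrite inE big_cons => /orP[/eqP <- | i0r] Pi0.
  by rewrite Pi0 geq_minl.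
by case: (P a); [apply: leq_trans (geq_minr _ _) _|]; apply: IHr.
Qed.

Lemma bigminn_geq (I : Type) (r : seq I) (P : pred I) (F : I -> nat) d m :
  m <= d -> (forall i, P i -> m <= F i) -> m <= \big[minn/d]_(i <- r | P i) F i.
Proof.
by move=> md mF; elim/big_ind: _ => // a b ma mb; rewrite leq_min ma mb.
Qed.

Lemma bigminn_leq_idx (I : Type) (r : seq I) (P : pred I) (F : I -> nat) d :
  \big[minn/d]_(i <- r | P i) F i <= d.
Proof.
by elim: r => [|a r IHr]; rewrite ?big_nil // big_cons; case: (P a); rewrite // geq_min IHr orbT.
Qed.

Lemma card_ord_ltn n k : k <= n -> #|[set m : 'I_n | m < k]| = k.
Proof.
move=> kn; have -> : [set m : 'I_n | m < k] = widen_ord kn @: [set: 'I_k].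
  apply/setP => m; rewrite inE; apply/idP/imsetP => [mk | [m' _ ->]] /=.
    by exists (Ordinal mk); [rewrite inE | apply: val_inj].
  exact: ltn_ord.
rewrite card_imset ?cardsT ?card_ord //.
by move=> a b /(congr1 val) ab; apply: val_inj.
Qed.

Lemma card_draws_meet (T : finType) (D : {set T}) i m : m <= i ->
  #|[set Z : {set T} | (#|Z| == i) && (#|Z :&: D| == m)]| =
  'C(#|D|, m) * 'C(#|T| - #|D|, i - m).
Proof.
move=> mi; pose f (Z : {set T}) := (Z :&: D, Z :\: D).
have f_inj : injective f.
  by move=> Z1 Z2 [E1 E2]; rewrite -(setID Z1 D) -(setID Z2 D) E1 E2.
rewrite -(card_imset _ f_inj).
have -> : f @: [set Z : {set T} | (#|Z| == i) && (#|Z :&: D| == m)] =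
    setX [set U : {set T} | U \subset D & #|U| == m]
         [set V : {set T} | V \subset ~: D & #|V| == i - m].
  apply/setP => -[U V]; rewrite !inE /=.
  apply/imsetP/andP => [[Z] | [/andP[UD Um] /andP[VD Vm]]].
    rewrite inE => /andP[/eqP Zi /eqP Zm] [-> ->].
    by rewrite subsetIr setDE subsetIr -setDE -Zi -Zm -(cardsID D Z) addKn !eqxx.
  have dVD : [disjoint V & D] by rewrite -[D]setCK -subsets_disjoint.
  have ZD : (U :|: V) :&: D = U.
    by rewrite setIUl (setIidPl UD) (disjoint_setI0 dVD) setU0.
  have ZnD : (U :|: V) :\: D = V.
    have /eqP UnD : U :\: D == set0 by rewrite setD_eq0.
    by rewrite setDUl UnD (setDidPl dVD) set0U.
  exists (U :|: V); last by rewrite /f ZD ZnD.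
  by rewrite inE -(cardsID D) ZD ZnD (eqP Um) (eqP Vm) subnKC // !eqxx.
rewrite cardsX !cards_draws; congr (_ * 'C(_, _)).
by rewrite -(cardsC D) addKn.
Qed.

Section Agreement.
Variable l : nat.
Implicit Types (S : {set 'I_l}) (x y : bv l).

Definition agree S x y := [forall j in S, x j == y j].

Definition restrict S x : bv l := [ffun j => (j \in S) && x j].

Lemma agree_restrictE S x y : agree S x y = (restrict S x == restrict S y).
Proof.
apply/forall_inP/eqP => [Exy | /ffunP Exy j jS].
  by apply/ffunP => j; rewrite !ffunE; case: (boolP (j \in S)) => //= jS; exact/eqP/Exy.
by have := Exy j; rewrite !ffunE jS /= => ->.
Qed.

Lemma agree_refl S x : agree S x x.
Proof. exact/forall_inP. Qed.

Lemma agree_subset (S T : {set 'I_l}) x y : S \subset T -> agree T x y -> agree S x y.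
Proof. by move=> /subsetP ST /forall_inP Exy; apply/forall_inP => j /ST /Exy. Qed.

Lemma card_agree S x : #|[set y | agree S x y]| = 2 ^ (l - #|S|).
Proof.
pose h y : bv l := [ffun j => x j (+) y j].
have h_inj : injective h.
  move=> y1 y2 /ffunP E; apply/ffunP => j; have := E j; rewrite !ffunE.
  by case: (x j); case: (y1 j); case: (y2 j).
have -> : [set y | agree S x y] = h @^-1: [set y | y \in pffun_on false (~: S) predT].
  apply/setP => y; rewrite !inE; apply/forall_inP/pffun_onP => [Exy | [supp _]].
    split=> [|//]; apply/subsetP => j; rewrite !inE ffunE; apply: contraR.
    by rewrite negbK => /Exy /eqP ->; case: (y j).
  move=> j jS; have := subsetP supp j; rewrite !inE ffunE jS /=.
  by case: (x j); case: (y j) => //= /(_ isT).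
rewrite card_preimset // cardsE card_pffun_on card_bool.
have := cardsC S; rewrite card_ord => E.
by rewrite -[X in X - _]E addKn.
Qed.

End Agreement.

Lemma dHC l (x y : bv l) : dH x y = dH y x.
Proof. by apply: eq_card => j; rewrite !inE eq_sym. Qed.

Lemma dH_leq l (x y : bv l) : dH x y <= l.
Proof. by rewrite /dH -[l in _ <= l]card_ord max_card. Qed.

Lemma dH_eq0 l (x y : bv l) : (dH x y == 0) = (x == y).
Proof.
apply/idP/eqP => [/eqP/card0_eq Exy | ->]; last by apply/eqP/eq_card0 => j; rewrite !inE eqxx.
by apply/ffunP => j; have := Exy j; rewrite !inE => /negbFE/eqP.
Qed.

Lemma dH_card l (x y : bv l) : dH x y = #|[set j | x j != y j]|.
Proof. by apply: eq_card => j; rewrite inE. Qed.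

Section Krawtchouk.
Variable l : nat.
Local Open Scope ring_scope.

Definition walsh (Z : {set 'I_l}) (x : bv l) : R := (-1) ^+ #|[set j in Z | x j]|.

Lemma walsh_mul Z x y : walsh Z x * walsh Z y = (-1) ^+ #|Z :&: [set j | x j != y j]|.
Proof.
rewrite /walsh -exprD; set X := [set j in Z | x j]; set Y := [set j in Z | y j].
have -> : Z :&: [set j | x j != y j] = (X :\: Y) :|: (Y :\: X).
  by apply/setP => j; rewrite !inE; case: (j \in Z); case: (x j); case: (y j).
rewrite cardsU.
have -> : (X :\: Y) :&: (Y :\: X) = set0.
  by apply/setP => j; rewrite !inE; case: (j \in Z); case: (x j); case: (y j).
rewrite cards0 subn0 -(cardsID Y X) -[in #|Y|](cardsID X Y) setIC.
by rewrite addnACA addnn -muln2 exprD exprM sqrr_sign mul1r.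
Qed.

Lemma kraw_sum_subsets i (D : {set 'I_l}) :
  \sum_(Z : {set 'I_l} | #|Z| == i) (-1) ^+ #|Z :&: D| = kraw l i #|D|.
Proof.
have meet_small (Z : {set 'I_l}) : #|Z| == i -> (#|Z :&: D| < i.+1)%N.
  by move=> /eqP <-; rewrite ltnS subset_leq_card ?subsetIl.
rewrite (partition_big (fun Z : {set 'I_l} => (inord #|Z :&: D| : 'I_i.+1)) predT) //=.
apply: eq_bigr => m _; have mi : (m <= i)%N by rewrite -ltnS ltn_ord.
rewrite (eq_bigr (fun _ => (-1) ^+ m)); last first.
  by move=> Z /andP[/meet_small Zi /eqP <-]; rewrite inordK.
rewrite (eq_bigl [in [set Z : {set 'I_l} | (#|Z| == i) && (#|Z :&: D| == m)]]); last first.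
  move=> Z; rewrite !inE; case Zi: (#|Z| == i) => //=.
  apply/eqP/eqP => [<- | Em]; first by rewrite inordK ?meet_small.
  by rewrite Em inord_val.
rewrite sumr_const card_draws_meet // card_ord RmultE RmultE RpowE !INRE.
by rewrite -mulrA -natrM mulr_natr.
Qed.

Lemma kraw0 i : kraw l i 0 = 'C(l, i)%:R.
Proof.
rewrite -(cards0 'I_l) -kraw_sum_subsets.
rewrite (eq_bigr (fun _ => 1)) => [|Z _]; last by rewrite setI0 cards0.
by rewrite sumr_const -cardsE card_draws card_ord.
Qed.

Lemma kraw_dH_walsh i x y :
  kraw l i (dH x y) = \sum_(Z : {set 'I_l} | #|Z| == i) walsh Z x * walsh Z y.
Proof. by rewrite dH_card -kraw_sum_subsets; apply: eq_bigr => Z _; rewrite walsh_mul. Qed.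

(* Grouping the pairs by their common restriction to [S] makes this a sum of squares. *)
Lemma sum_agree_mul_ge0 (S : {set 'I_l}) (f : bv l -> R) :
  0 <= \sum_(p : bv l * bv l | agree S p.1 p.2) f p.1 * f p.2.
Proof.
rewrite (eq_bigl (fun p : bv l * bv l => predT p.1 && agree S p.1 p.2)) //.
rewrite -(pair_big_dep predT (agree S) (fun x y => f x * f y)) /=.
pose fsum w := \sum_(y | restrict S y == w) f y.
rewrite (eq_bigr (fun x => f x * fsum (restrict S x))) => [|x _]; last first.
  by rewrite mulr_sumr; apply: eq_bigl => y; rewrite agree_restrictE eq_sym.
rewrite (partition_big (restrict S) predT) //=; apply: sumr_ge0 => w _.
rewrite (eq_bigr (fun x => f x * fsum w)) => [|x /eqP ->] //.
by rewrite -mulr_suml -expr2 sqr_ge0.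
Qed.

End Krawtchouk.

Section DistanceDistribution.
Variables (l n : nat) (h : bv l -> bv n).
Local Open Scope ring_scope.

Definition dist_count (S : {set 'I_l}) (i : nat) : nat :=
  #|[set p : bv l * bv l | agree S p.1 p.2 && (dH (h p.1) (h p.2) == i)]|.

Lemma dist_count_antitone (S T : {set 'I_l}) i :
  S \subset T -> (dist_count T i <= dist_count S i)%N.
Proof.
move=> ST; apply/subset_leq_card/subsetP => p; rewrite !inE => /andP[Ap ->].
by rewrite (agree_subset ST Ap).
Qed.

Lemma dist_count0 S : injective h -> dist_count S 0 = (2 ^ l)%N.
Proof.
move=> h_inj; rewrite /dist_count; have -> : [set p : bv l * bv l | agree S p.1 p.2 && (dH (h p.1) (h p.2) == 0%N)]
    = [set (x, x) | x in [set: bv l]].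
  apply/setP => -[x y]; rewrite !inE /= dH_eq0.
  apply/andP/imsetP => [[_ /eqP /h_inj ->] | [z _ [-> ->]]].
    by exists y; rewrite ?inE.
  by split; [apply: agree_refl |].
by rewrite card_imset => [|a b [] //]; rewrite cardsT card_ffun card_bool card_ord.
Qed.

Lemma dist_count_gap S d i :
  (forall x y, agree S x y -> x != y -> d <= dH (h x) (h y))%N ->
  (0 < i < d)%N -> dist_count S i = 0%N.
Proof.
move=> dist_ge /andP[i_gt0 i_lt_d]; apply/eqP; rewrite cards_eq0; apply/eqP/setP => -[x y].
rewrite !inE /=; apply/negbTE/negP => /andP[Axy /eqP dxy].
have [xy | /(dist_ge _ _ Axy)] := eqVneq x y.
  by move: i_gt0; rewrite -dxy xy lt0n dH_eq0 eqxx.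
by rewrite dxy leqNgt i_lt_d.
Qed.

Lemma sum_agree_dist_count S (F : nat -> R) :
  \sum_(p : bv l * bv l | agree S p.1 p.2) F (dH (h p.1) (h p.2)) =
  \sum_(j < n.+1) (dist_count S j)%:R * F j.
Proof.
have dH_small (p : bv l * bv l) : (dH (h p.1) (h p.2) < n.+1)%N by rewrite ltnS dH_leq.
rewrite (partition_big (fun p : bv l * bv l => inord (dH (h p.1) (h p.2)) : 'I_n.+1) predT) //=.
apply: eq_bigr => j _; rewrite (eq_bigr (fun _ => F j)) => [|p /andP[_ /eqP <-]]; last first.
  by rewrite inordK.
rewrite mulr_natl -sumr_const; apply: eq_bigl => p; rewrite !inE.
case: (agree S p.1 p.2) => //=; apply/eqP/eqP => [<- | Ej]; first by rewrite inordK.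
by rewrite Ej inord_val.
Qed.

Lemma sum_dist_count S :
  \sum_(j < n.+1) (dist_count S j)%:R = (2 ^ l * 2 ^ (l - #|S|))%:R :> R.
Proof.
under eq_bigr do rewrite -[_%:R]mulr1.
rewrite -(sum_agree_dist_count S (fun=> 1)).
rewrite (eq_bigl (fun p : bv l * bv l => predT p.1 && agree S p.1 p.2)) //.
rewrite -(pair_big_dep predT (agree S) (fun _ _ => 1)) /=.
rewrite (eq_bigr (fun=> (2 ^ (l - #|S|))%:R)) => [|x _]; last first.
  rewrite (eq_bigl [in [set y | agree S x y]]) => [|y]; last by rewrite inE.
  by rewrite sumr_const card_agree.
by rewrite sumr_const card_ffun card_bool card_ord natrM mulr_natl.
Qed.

Lemma dist_count_kraw_ge0 S i :
  0 <= \sum_(j < n.+1) (dist_count S j)%:R * kraw n i j.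
Proof.
rewrite -sum_agree_dist_count.
under eq_bigr do rewrite kraw_dH_walsh.
rewrite exchange_big /=; apply: sumr_ge0 => Z _.
exact: (sum_agree_mul_ge0 S (fun x => walsh Z (h x))).
Qed.

End DistanceDistribution.

Lemma sumr_gap (a : nat -> R) n d : (0 < d <= n.+1)%N ->
  (forall j, 0 < j < d -> a j = 0%R)%N ->
  (\sum_(j < n.+1) a j = a 0%N + \sum_(d <= j < n.+1) a j)%R.
Proof.
move=> /andP[d_gt0 d_le] a_gap; rewrite -(big_mkord xpredT) (big_cat_nat _ d_le) //=.
rewrite big_ltn // big_nat_cond big1 ?addr0 // => j /andP[/andP[j_gt0 j_lt] _].
by rewrite a_gap // j_gt0.
Qed.

Lemma split_at_first_diff l (x y : bv l) : x != y ->
  exists2 j : 'I_l, x j != y j & split_at j x y || split_at j y x.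
Proof.
move=> xy; have [j0 Dj0] : exists j, x j != y j.
  apply/existsP; rewrite -negb_forall; apply: contra xy => /forallP Exy.
  by apply/eqP/ffunP => j; apply/eqP.
case: (@arg_minnP _ j0 (fun j => x j != y j) val Dj0) => j Dj j_min; exists j => //.
have agree_below (j' : 'I_l) : j' < j -> x j' == y j'.
  by move=> j'j; apply: contraTT j'j => /j_min; rewrite -leqNgt.
have split_xy (u v : bv l) : (forall j' : 'I_l, j' < j -> u j' == v j') ->
    ~~ u j -> v j -> split_at j u v.
  move=> uv uj vj; apply/forallP => j'.
  by case: ltngtP => [/uv -> | // | /val_inj ->] /=; rewrite ?uj ?vj.
case xj : (x j); case yj : (y j); rewrite xj yj in Dj => //.
- apply/orP; right; apply: split_xy; rewrite ?xj ?yj // => j' /agree_below.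
  by rewrite eq_sym.
- by apply/orP; left; apply: split_xy agree_below _ _; rewrite ?xj ?yj.
Qed.

Section SortedPartialDistances.
Variables (l : nat) (g : bv l -> bv l).

Lemma Dmin_leq i : Dmin g i <= l.
Proof. exact: bigminn_leq_idx. Qed.

Lemma Dmin_le_dH i x y : split_at i x y -> Dmin g i <= dH (g x) (g y).
Proof.
move=> sxy; apply: leq_trans (geq_bigminn_cond _ _ (mem_index_enum x) isT) _.
exact: (geq_bigminn_cond _ _ (mem_index_enum y) sxy).
Qed.

Lemma Dmin_gt0 i : injective g -> i < l -> 0 < Dmin g i.
Proof.
move=> g_inj il; apply: bigminn_geq => [|x _]; first exact: leq_ltn_trans il.
apply: bigminn_geq => [|y]; first exact: leq_ltn_trans il.
move=> /forallP /(_ (Ordinal il)) /andP[_ /implyP /(_ (eqxx _)) /andP[xi yi]].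
by rewrite lt0n dH_eq0; apply: contraTneq yi => /g_inj <-.
Qed.

Definition coord_order := sort (fun i j => Dmin g i <= Dmin g j) (iota 0 l).

Definition Dsorted k := Dmin g (nth 0 coord_order k).

Lemma perm_coord_order : perm_eq coord_order (iota 0 l).
Proof. exact/permPl/perm_sort. Qed.

Lemma size_coord_order : size coord_order = l.
Proof. by rewrite (perm_size perm_coord_order) size_iota. Qed.

Lemma mem_coord_order j : (j \in coord_order) = (j < l).
Proof. by rewrite (perm_mem perm_coord_order) mem_iota. Qed.

Lemma Dsorted_mono i j : i <= j -> j < l -> Dsorted i <= Dsorted j.
Proof.
move=> ij jl; pose le_Dmin i j := Dmin g i <= Dmin g j.
have le_Dmin_trans : transitive le_Dmin by move=> ? ? ?; apply: leq_trans.
apply: (sorted_leq_nth le_Dmin_trans (fun=> leqnn _)) => //.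
- by apply: sort_sorted => a b; apply: leq_total.
- by rewrite inE size_coord_order (leq_ltn_trans ij).
- by rewrite inE size_coord_order.
Qed.

Lemma Dsorted_gt0 k : injective g -> k < l -> 0 < Dsorted k.
Proof.
move=> g_inj kl; apply: Dmin_gt0 => //.
by rewrite -mem_coord_order mem_nth // size_coord_order.
Qed.

Lemma rank_proof (j : 'I_l) : index (val j) coord_order < l.
Proof. by rewrite -[ltnRHS]size_coord_order index_mem mem_coord_order ltn_ord. Qed.

Definition rank (j : 'I_l) : 'I_l := Ordinal (rank_proof j).

Lemma rank_inj : injective rank.
Proof.
move=> a b /(congr1 val) /= /(index_inj 0) ab; apply: val_inj.
by apply: ab; rewrite mem_coord_order.
Qed.

Definition prefix k : {set 'I_l} := [set j | rank j < k].

Lemma prefix_subset k : prefix k \subset prefix k.+1.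
Proof. by apply/subsetP => j; rewrite !inE; apply: ltnW. Qed.

Lemma card_prefix k : k <= l -> #|prefix k| = k.
Proof.
move=> kl; have -> : prefix k = rank @^-1: [set m : 'I_l | m < k].
  by apply/setP => j; rewrite !inE.
by rewrite card_preimset ?card_ord_ltn //; apply: rank_inj.
Qed.

Lemma Dsorted_le_Dmin k (j : 'I_l) : j \notin prefix k -> Dsorted k <= Dmin g j.
Proof.
rewrite inE -leqNgt => k_le_rank.
have := Dsorted_mono k_le_rank (rank_proof j).
by rewrite /Dsorted /= nth_index // mem_coord_order ltn_ord.
Qed.

(* Inputs agreeing on [prefix k] first differ at a coordinate of rank >= k. *)
Lemma Dsorted_le_dH k x y :
  agree (prefix k) x y -> x != y -> Dsorted k <= dH (g x) (g y).
Proof.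
move=> Axy /split_at_first_diff [j Dj sj].
have /Dsorted_le_Dmin Dk : j \notin prefix k.
  by apply: contra Dj => /(forall_inP Axy).
apply: leq_trans Dk _; case/orP: sj => [/Dmin_le_dH // | /Dmin_le_dH].
by rewrite dHC.
Qed.

Lemma Dsorted_le_dcode k : injective g -> k < l -> Dsorted k <= dcode l (l - k).
Proof.
move=> g_inj kl; pose z : bv l := [ffun=> false].
pose C := g @: [set y | agree (prefix k) z y].
have card_C : #|C| = 2 ^ (l - k).
  by rewrite card_imset // card_agree card_prefix // ltnW.
apply: leq_trans (leq_bigmax_cond C _); last by rewrite card_C.
apply: bigminn_geq => [|_ /imsetP[x Ax ->]]; first exact: Dmin_leq.
apply: bigminn_geq => [|_ /andP[/imsetP[y Ay ->] yx]]; first exact: Dmin_leq.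
apply: Dsorted_le_dH; last by apply: contraNneq yx => ->.
by move: Ax Ay; rewrite !inE !agree_restrictE => /eqP <- /eqP <-.
Qed.

Lemma exponent_Dsorted : exponent g = seq_exponent l Dsorted.
Proof.
rewrite /exponent /seq_exponent; congr Rmult.
have iotaE : iota 0 l = index_iota 0 l by rewrite /index_iota subn0.
transitivity (\big[Rplus/R0]_(j <- iota 0 l) logb l (INR (Dmin g j))).
  by rewrite iotaE big_mkord.
rewrite -(perm_big _ perm_coord_order) -{1}(mkseq_nth 0 coord_order) /mkseq big_map.
by rewrite size_coord_order iotaE big_mkord.
Qed.

End SortedPartialDistances.

Section LinearProgram.
Variables (l : nat) (g : bv l -> bv l).
Hypothesis g_inj : injective g.
Local Open Scope ring_scope.

(* The paper's B_i^(k): the distance distribution of the image of a coset of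
   [prefix g k], averaged over the cosets. *)
Definition lp_coef k i : R := (dist_count g (prefix g k) i)%:R / (2 ^ l)%:R.

Lemma lp_coef_ge0 k i : 0 <= lp_coef k i.
Proof. by rewrite divr_ge0 ?ler0n. Qed.

Lemma lp_coef_antitone k i : lp_coef k.+1 i <= lp_coef k i.
Proof.
by rewrite ler_wpM2r ?invr_ge0 ?ler0n // ler_nat dist_count_antitone ?prefix_subset.
Qed.

Lemma sum_dist_count_prefix k (F : nat -> R) : (k < l)%N ->
  \sum_(j < l.+1) (dist_count g (prefix g k) j)%:R * F j =
  (2 ^ l)%:R * F 0%N + \sum_(Dsorted g k <= j < l.+1) (dist_count g (prefix g k) j)%:R * F j.
Proof.
move=> kl; pose a j := (dist_count g (prefix g k) j)%:R * F j.
rewrite (@sumr_gap a _ (Dsorted g k)) /a ?dist_count0 //.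
  by rewrite Dsorted_gt0 // (leq_trans (Dmin_leq _ _)).
by move=> j /(dist_count_gap (@Dsorted_le_dH _ g k)) ->; rewrite mul0r.
Qed.

Lemma lp_coef_sum k : (k < l)%N ->
  \sum_(Dsorted g k <= i < l.+1) lp_coef k i = 2%:R ^+ (l - k) - 1.
Proof.
move=> kl; have := sum_dist_count_prefix (fun=> 1) kl.
under eq_bigr do rewrite mulr1.
under [X in _ = _ + X]eq_bigr do rewrite mulr1.
rewrite sum_dist_count card_prefix ?(ltnW kl) // natrM mulrC mulr1.
move/eqP; rewrite addrC -subr_eq eq_sym -[X in _ - X]mul1r -mulrBl => /eqP sumE.
have two_l_neq0 : (2 ^ l)%:R != 0 :> R by rewrite pnatr_eq0 expn_eq0.
by rewrite /lp_coef -mulr_suml sumE mulfK // natrX.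
Qed.

Lemma lp_coef_kraw k i : (k < l)%N ->
  - 'C(l, i)%:R <= \sum_(Dsorted g k <= j < l.+1) lp_coef k j * kraw l i j.
Proof.
move=> kl; have := dist_count_kraw_ge0 g (prefix g k) i.
rewrite sum_dist_count_prefix // kraw0 => sum_ge0.
rewrite /lp_coef; under eq_bigr do rewrite mulrAC.
rewrite -mulr_suml ler_pdivlMr ?ltr0n ?expn_gt0 // mulNr mulrC.
by rewrite -subr_ge0 opprK addrC.
Qed.

End LinearProgram.

Lemma LP_valid_Dsorted l (g : bv l -> bv l) : injective g -> LP_valid l (Dsorted g).
Proof.
move=> g_inj; split; first by move=> i il; apply: Dsorted_mono.
split; first by move=> i il; apply: Dsorted_le_dcode.
have r_to_k r : 1 <= r <= l -> l - r < l.
  by case/andP=> r_gt0 r_le; rewrite ltn_subrL r_gt0 (leq_trans _ r_le).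
exists (lp_coef g); split; [|split; [|split]].
- by move=> k i _ _; apply/RleP/lp_coef_ge0.
- move=> r r_bnd; rewrite lp_coef_sum ?r_to_k // subKn; last by case/andP: r_bnd.
  by rewrite RminusE RpowE IZRposE INRE.
- by move=> r i _ _; rewrite addn1; apply/Rle_ge/RleP/lp_coef_antitone.
- move=> i r _ r_bnd; apply/Rle_ge/RleP; rewrite RoppE INRE.
  exact: lp_coef_kraw (r_to_k r r_bnd).
Qed.

Theorem proposition4 (l : nat) (hl : 2 <= l) :
  forall g : bv l -> bv l, kernel g ->
  exists D : nat -> nat,
    LP_valid l D /\ (forall i, i < l -> 0 < D i) /\
    Rle (exponent g) (seq_exponent l D).
Proof.
move=> g /bij_inj g_inj; exists (Dsorted g); split; first exact: LP_valid_Dsorted.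
split; first by move=> i; apply: Dsorted_gt0.
by rewrite exponent_Dsorted; apply: Rle_refl.
Qed.
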